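(* Let $K\ge1$, fix $j\in\{1,\dots,K\}$, let $\lambda_j>0$, $\mu_j>0$ and $\rho_j=\lambda_j/\mu_j$. Let $f:\mathbb{Z}_{\ge0}^K\to\mathbb{R}$ be any function. For $\bar q=(q_1,\dots,q_K)\in\mathbb{Z}_{\ge0}^K$ define $$H(\bar q)=\frac{1}{\mu_j}\cdot\frac{1}{\rho_j}\sum_{i=1}^{q_j}\sum_{m=0}^{q_j-i} f\big(\bar q-(i+m)e_j\big)\frac{(q_j-i)!}{(q_j-i-m)!}\rho_j^{-m},$$ where $e_j$ is the $j$-th unit vector (so $H(\bar q)=0$ when $q_j=0$). Then for every $\bar q\in\mathbb{Z}_{\ge0}^K$, $$\lambda_j\big(H(\bar q+e_j)-H(\bar q)\big)-\mu_j q_j\big(H(\bar q)-H(\bar q-e_j)\big)=f(\bar q),$$ where the second term is interpreted as $0$ when $q_j=0$. *)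

From mathcomp Require Import all_boot all_order all_algebra.
Set Implicit Arguments. Unset Strict Implicit. Unset Printing Implicit Defensive.
Import Order.TTheory GRing.Theory Num.Theory.
Local Open Scope ring_scope.

(* q - n e_j  (only used with n <= q_j, so truncation never happens there) *)
Definition subej (K : nat) (j : 'I_K) (n : nat) (q : {ffun 'I_K -> nat})
  : {ffun 'I_K -> nat} :=
  [ffun k => if k == j then (q k - n)%N else q k].

Definition addej (K : nat) (j : 'I_K) (q : {ffun 'I_K -> nat})
  : {ffun 'I_K -> nat} :=
  [ffun k => if k == j then (q k).+1 else q k].

Definition Hfun (R : realFieldType) (K : nat) (j : 'I_K) (lam mu : R)
  (f : {ffun 'I_K -> nat} -> R) (q : {ffun 'I_K -> nat}) : R :=
  let rho := lam / mu in
  mu^-1 * rho^-1 *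
  \sum_(1 <= i < (q j).+1) \sum_(0 <= m < (q j - i).+1)
     f (subej j (i + m) q) * (((q j - i)`!)%:R / ((q j - i - m)`!)%:R)
       * rho ^- m.

From mathcomp Require Import all_boot all_order all_algebra.
From mathcomp Require Import ring.
Import Order.TTheory GRing.Theory Num.Theory.
Set Implicit Arguments. Unset Strict Implicit.
Local Open Scope ring_scope.

(* Along the j-th axis, H is lam^-1 times the partial sums of
   G(a) = \sum_(m <= a) F(a - m) a^_m rho^-m, with F(s) = f(q with q_j := s);
   falling factorials give G(a+1) = F(a+1) + (a+1)/rho G(a) and G(0) = F(0).
   The lam-term of the generator is then G(q_j), the mu-term is q_j/rho G(q_j - 1),
   and their difference is F(q_j) = f(q). *)

Definition setj (K : nat) (j : 'I_K) (q : {ffun 'I_K -> nat}) (s : nat)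
  : {ffun 'I_K -> nat} :=
  [ffun k => if k == j then s else q k].

Section FfactSum.

Variables (R : fieldType) (rho : R) (F : nat -> R).

Definition ffact_sum (a : nat) : R :=
  \sum_(0 <= m < a.+1) F (a - m) * (a ^_ m)%:R * rho ^- m.

Lemma ffact_sum0 : ffact_sum 0 = F 0.
Proof. by rewrite /ffact_sum big_nat1 ffactn0 expr0 invr1 !mulr1. Qed.

Lemma ffact_sumS n : ffact_sum n.+1 = F n.+1 + n.+1%:R / rho * ffact_sum n.
Proof.
rewrite /ffact_sum big_nat_recl // subn0 ffactn0 expr0 invr1 !mulr1.
congr (_ + _); rewrite big_distrr /=; apply: eq_big_nat => m _.
by rewrite subSS ffactSS natrM exprS invfM; ring.
Qed.

End FfactSum.

Lemma natr_fact_div (R : numFieldType) (a m : nat) : (m <= a)%N ->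
  (a`!)%:R / ((a - m)`!)%:R = (a ^_ m)%:R :> R.
Proof.
move=> le_ma; rewrite -(ffact_fact le_ma) natrM mulfK //.
by rewrite pnatr_eq0 -lt0n fact_gt0.
Qed.

Lemma subej_setj K (j : 'I_K) n q : subej j n q = setj j q (q j - n).
Proof. by apply/ffunP=> k; rewrite !ffunE; case: eqP => // ->. Qed.

Lemma setj_id K (j : 'I_K) q : setj j q (q j) = q.
Proof. by apply/ffunP=> k; rewrite !ffunE; case: eqP => // ->. Qed.

Lemma eq_setj K (j : 'I_K) (q q' : {ffun 'I_K -> nat}) :
  (forall k, k != j -> q' k = q k) -> setj j q' =1 setj j q.
Proof.
by move=> eq_qq' s; apply/ffunP=> k; rewrite !ffunE; case: ifPn => // /eq_qq'.
Qed.

Lemma Hfun_ffact_sum (R : realFieldType) K (j : 'I_K) (lam mu : R) f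
    (q q' : {ffun 'I_K -> nat}) :
  lam != 0 -> mu != 0 -> (forall k, k != j -> q' k = q k) ->
  Hfun j lam mu f q' =
  lam^-1 * \sum_(0 <= a < q' j) ffact_sum (lam / mu) (fun s => f (setj j q s)) a.
Proof.
move=> lam0 mu0 eq_qq'; rewrite /Hfun.
have -> : mu^-1 * (lam / mu)^-1 = lam^-1 by rewrite invfM invrK mulrCA mulVf ?mulr1.
congr (_ * _); rewrite [RHS]big_nat_rev big_add1 /=.
apply: eq_big_nat => i /andP[_ lt_iq]; rewrite add0n.
apply: eq_big_nat => m /andP[_ lt_m]; rewrite subej_setj (eq_setj eq_qq') subnDA.
by rewrite natr_fact_div // -ltnS.
Qed.

Theorem lemma3 (R : realFieldType) (K : nat) (j : 'I_K) (lam mu : R)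
  (hlam : 0 < lam) (hmu : 0 < mu) (f : {ffun 'I_K -> nat} -> R)
  (q : {ffun 'I_K -> nat}) :
  lam * (Hfun j lam mu f (addej j q) - Hfun j lam mu f q)
  - (if q j == 0%N then 0
     else mu * (q j)%:R * (Hfun j lam mu f q - Hfun j lam mu f (subej j 1 q)))
  = f q.
Proof.
have lam0 : lam != 0 by rewrite gt_eqF.
have mu0 : mu != 0 by rewrite gt_eqF.
have addej_off k : k != j -> addej j q k = q k by rewrite ffunE => /negPf ->.
have subej_off k : k != j -> subej j 1 q k = q k by rewrite ffunE => /negPf ->.
rewrite (Hfun_ffact_sum f lam0 mu0 addej_off) (Hfun_ffact_sum f lam0 mu0 subej_off).
rewrite (Hfun_ffact_sum f lam0 mu0 (q := q)) // !ffunE eqxx big_nat_recr //=.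
rewrite -[in RHS](setj_id j q); case: (q j) => [|n] /=.
  by rewrite big_geq // ffact_sum0 add0r mulr0 !subr0 mulVKf.
rewrite subn1 big_nat_recr //= ffact_sumS.
by field; rewrite lam0 mu0.
Qed.
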